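(* Let $j\in\mathbb Z$, let $\sigma$ be a $2$-cell of $X_j$ with vertical $1$-cells $e_1,e_2$. If $\bar\sigma_1,\dots,\bar\sigma_\ell$ are $2$-cells of $X_{j+1}$ contained in $\pi_j(\sigma)$ forming a chain (consecutive ones intersect) that joins $\pi_j(e_1)$ to $\pi_j(e_2)$ (i.e. $\bar\sigma_1\cap\pi_j(e_1)\ne\emptyset$ and $\bar\sigma_\ell\cap\pi_j(e_2)\ne\emptyset$), then $\ell\ge m$.
   Context: Standing construction ($n=2$). Fix an integer $L\ge100$, $m=4$, $m_v=3L$. For $j\in\mathbb Z$, $Y_j$ is the cell complex on $\mathbb R^2$ given by the tiling by rectangles $[am^{-j},(a+1)m^{-j}]\times[bm_v^{-j},(b+1)m_v^{-j}]$, $a,b\in\mathbb Z$; a $1$-cell is vertical if it is a translate of $\{0\}\times[0,m_v^{-j}]$. Let $\Phi(x,y)=(m^{-1}x,m_v^{-1}y)$. For $k,\ell\in\mathbb Z$, $i\in\{1,2,3\}$, $a_{k,\ell,i}=\{k+\tfrac i4\}\times[(3\ell+i-1)m_v^{-1},(3\ell+i)m_v^{-1}]$. $\mathcal R$ is the equivalence relation on $\mathbb R^2$ generated by $p\sim p+(0,m_v^{-1})$ for $p\in a_{k,\ell,i}$. $\Phi^j_*\mathcal R=\{(\Phi^jp,\Phi^jq):(p,q)\in\mathcal R\}$; $\mathcal R_j$ is generated by $\Phi^i_*\mathcal R$, $i<j$. $X_j=\mathbb R^2/\mathcal R_j$, $\hat\pi^j$ the quotient map, $\pi_j:X_j\to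 X_{j+1}$ the induced map; $X_j$ has the CW structure whose open cells are images of open cells of $Y_j$, with vertical cells being images of vertical cells. *)

From Stdlib Require Import Reals ZArith.
Open Scope R_scope.

Definition m : nat := 4.
Definition mv (L : nat) : R := 3 * INR L.

Definition pt : Type := (R * R)%type.

Definition in_a (L : nat) (k l : Z) (i : nat) (p : pt) : Prop :=
  fst p = IZR k + INR i / INR m /\
  (3 * IZR l + INR i - 1) / mv L <= snd p <= (3 * IZR l + INR i) / mv L.

Definition Rgen (L : nat) (p q : pt) : Prop :=
  exists (k l : Z) (i : nat), (1 <= i <= 3)%nat /\ in_a L k l i p /\
    q = (fst p, snd p + / mv L).

Inductive eq_closure {A : Type} (S : A -> A -> Prop) : A -> A -> Prop :=
| ec_base x y : S x y -> eq_closure S x y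
| ec_refl x : eq_closure S x x
| ec_sym x y : eq_closure S x y -> eq_closure S y x
| ec_trans x y z : eq_closure S x y -> eq_closure S y z -> eq_closure S x z.

Definition Rrel (L : nat) : pt -> pt -> Prop := eq_closure (Rgen L).

Definition Phi_pow (L : nat) (i : Z) (p : pt) : pt :=
  (powerRZ (INR m) (- i) * fst p, powerRZ (mv L) (- i) * snd p).

Definition push (L : nat) (i : Z) (Rel : pt -> pt -> Prop) (p q : pt) : Prop :=
  exists p0 q0, Rel p0 q0 /\ p = Phi_pow L i p0 /\ q = Phi_pow L i q0.

Definition Rj (L : nat) (j : Z) : pt -> pt -> Prop :=
  eq_closure (fun p q => exists i : Z, (i < j)%Z /\ push L i (Rrel L) p q).

Definition Xj (L : nat) (j : Z) : Type :=
  { S : pt -> Prop | exists p, S = Rj L j p }.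

Definition hatpi (L : nat) (j : Z) (p : pt) : Xj L j :=
  exist _ (Rj L j p) (ex_intro _ p eq_refl).

Definition image (L : nat) (j : Z) (A : pt -> Prop) : Xj L j -> Prop :=
  fun x => exists p, A p /\ hatpi L j p = x.

Definition Yrect (L : nat) (j a b : Z) (p : pt) : Prop :=
  IZR a * powerRZ (INR m) (- j) <= fst p <= (IZR a + 1) * powerRZ (INR m) (- j) /\
  IZR b * powerRZ (mv L) (- j) <= snd p <= (IZR b + 1) * powerRZ (mv L) (- j).

Definition Yvert (L : nat) (j a b : Z) (p : pt) : Prop :=
  fst p = IZR a * powerRZ (INR m) (- j) /\
  IZR b * powerRZ (mv L) (- j) <= snd p <= (IZR b + 1) * powerRZ (mv L) (- j).

Definition cell2 (L : nat) (j a b : Z) : Xj L j -> Prop := image L j (Yrect L j a b).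
Definition vcell (L : nat) (j a b : Z) : Xj L j -> Prop := image L j (Yvert L j a b).

Definition is_2cell (L : nat) (j : Z) (S : Xj L j -> Prop) : Prop :=
  exists a b, S = cell2 L j a b.

(* image of a subset of X_j under the induced map pi_j : X_j -> X_{j+1}
   (pi_j (hatpi^j p) = hatpi^{j+1} p) *)
Definition pi_img (L : nat) (j : Z) (A : Xj L j -> Prop) : Xj L (j + 1) -> Prop :=
  fun y => exists x, A x /\ exists p, hatpi L j p = x /\ hatpi L (j + 1) p = y.

(* Every generator of R_j is a vertical translation, so the x-coordinate descends to a
   well-defined function on X_j.  Over it a 2-cell of X_{j+1} occupies a column of width
   m^-(j+1), two intersecting cells occupy equal or adjacent columns, and the images of
   the vertical sides of sigma lie over the lines x = a m^-j and x = (a+1) m^-j, which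
   are m columns of X_{j+1} apart.  A chain joining them therefore has at least m cells. *)
From Stdlib Require Import Reals ZArith Lra Lia.
Open Scope R_scope.

Definition width (j : Z) : R := powerRZ (INR m) (- j).

Lemma width_gt0 j : 0 < width j.
Proof. apply powerRZ_lt; unfold m; simpl; lra. Qed.

Lemma width_succ j : width j = INR m * width (j + 1).
Proof.
  unfold width; replace (- j)%Z with (- (j + 1) + 1)%Z by lia.
  rewrite powerRZ_add by (unfold m; simpl; lra).
  simpl; lra.
Qed.

Lemma eq_closure_fst (S : pt -> pt -> Prop) :
  (forall p q, S p q -> fst p = fst q) ->
  forall p q, eq_closure S p q -> fst p = fst q.
Proof. intros HS p q H; induction H; auto; congruence. Qed.

Lemma Rj_fst L j p q : Rj L j p q -> fst p = fst q.
Proof.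
  apply eq_closure_fst; intros p' q' [i [_ [p0 [q0 [H0 [-> ->]]]]]]; simpl; f_equal.
  revert H0; apply eq_closure_fst.
  now intros u v [k [l [i' [_ [_ ->]]]]].
Qed.

Lemma hatpi_fst L j p q : hatpi L j p = hatpi L j q -> fst p = fst q.
Proof.
  intro H; apply (Rj_fst L j).
  apply (f_equal (@proj1_sig _ _)) in H; simpl in H.
  rewrite H; apply ec_refl.
Qed.

Lemma cell2_fst L j a b p :
  cell2 L j a b (hatpi L j p) -> IZR a * width j <= fst p <= (IZR a + 1) * width j.
Proof. intros [p' [[Hx _] Hp']]; apply hatpi_fst in Hp'; rewrite <- Hp'; exact Hx. Qed.

Lemma Z_le_of_scaled a c w t :
  0 < w -> IZR a * w <= t -> t <= IZR c * w -> (a <= c)%Z.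
Proof. intros Hw H1 H2; apply le_IZR, (Rmult_le_reg_r w); lra. Qed.

Lemma cell2_meet_column L j a b a' b' y :
  cell2 L j a b y -> cell2 L j a' b' y -> (Z.abs (a - a') <= 1)%Z.
Proof.
  intros H H'; destruct H as [p [Hr <-]].
  assert (Hp : cell2 L j a b (hatpi L j p)) by now exists p.
  apply cell2_fst in Hp, H'; pose proof (width_gt0 j).
  assert (a <= a' + 1)%Z
    by (apply (Z_le_of_scaled _ _ (width j) (fst p)); rewrite ?plus_IZR; simpl; lra).
  assert (a' <= a + 1)%Z
    by (apply (Z_le_of_scaled _ _ (width j) (fst p)); rewrite ?plus_IZR; simpl; lra).
  lia.
Qed.

Lemma pi_vcell_column L j a b a' b' y :
  pi_img L j (vcell L j a b) y -> cell2 L (j + 1) a' b' y ->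
  (a' <= Z.of_nat m * a <= a' + 1)%Z.
Proof.
  intros [x [[p' [[Hx _] <-]] [p [Hp <-]]]] Hc.
  apply hatpi_fst in Hp; apply cell2_fst in Hc.
  fold (width j) in Hx; rewrite width_succ in Hx; pose proof (width_gt0 (j + 1)).
  assert (Hfst : fst p = IZR (Z.of_nat m * a) * width (j + 1))
    by (rewrite Hp, Hx, mult_IZR, <- INR_IZR_INZ; ring).
  set (c := (Z.of_nat m * a)%Z) in Hfst |- *.
  split; apply (Z_le_of_scaled _ _ (width (j + 1)) (fst p)); rewrite ?plus_IZR; simpl; lra.
Qed.

Lemma chain_column_drift L j ell (sb : nat -> Xj L (j + 1) -> Prop) a0 b0 :
  sb 0%nat = cell2 L (j + 1) a0 b0 ->
  (forall i, (i < ell)%nat -> is_2cell L (j + 1) (sb i)) ->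
  (forall i, (i + 1 < ell)%nat -> exists y, sb i y /\ sb (i + 1)%nat y) ->
  forall k, (k < ell)%nat ->
  exists a' b', sb k = cell2 L (j + 1) a' b' /\ (Z.abs (a' - a0) <= Z.of_nat k)%Z.
Proof.
  intros E0 Hcell Hchain; induction k as [|k IH]; intros Hk.
  - exists a0, b0; split; [exact E0 | simpl; lia].
  - destruct (IH ltac:(lia)) as [ak [bk [Ek Hdrift]]].
    destruct (Hcell (S k) Hk) as [a1 [b1 E1]].
    destruct (Hchain k ltac:(lia)) as [y [Hy Hy']].
    replace (k + 1)%nat with (S k) in Hy' by lia.
    rewrite Ek in Hy; rewrite E1 in Hy'.
    pose proof (cell2_meet_column _ _ _ _ _ _ _ Hy Hy').
    exists a1, b1; split; [exact E1 | lia].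
Qed.

Theorem mainTheorem7 (L : nat) (j : Z) (a b : Z)
  (sigma e1 e2 : Xj L j -> Prop) (ell : nat) (sb : nat -> Xj L (j + 1) -> Prop) :
  (100 <= L)%nat ->
  sigma = cell2 L j a b ->
  ((e1 = vcell L j a b /\ e2 = vcell L j (a + 1) b) \/
   (e1 = vcell L j (a + 1) b /\ e2 = vcell L j a b)) ->
  (1 <= ell)%nat ->
  (forall i, (i < ell)%nat -> is_2cell L (j + 1) (sb i)) ->
  (forall i, (i < ell)%nat -> forall y, sb i y -> pi_img L j sigma y) ->
  (forall i, (i + 1 < ell)%nat -> exists y, sb i y /\ sb (i + 1)%nat y) ->
  (exists y, sb 0%nat y /\ pi_img L j e1 y) ->
  (exists y, sb (ell - 1)%nat y /\ pi_img L j e2 y) ->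
  (m <= ell)%nat.
Proof.
  intros _ _ He Hell Hcell _ Hchain [y0 [Hy0 He1]] [yl [Hyl He2]].
  destruct (Hcell 0%nat ltac:(lia)) as [a0 [b0 E0]].
  destruct (chain_column_drift L j ell sb a0 b0 E0 Hcell Hchain (ell - 1) ltac:(lia))
    as [al [bl [El Hdrift]]].
  rewrite E0 in Hy0; rewrite El in Hyl.
  destruct He as [[-> ->] | [-> ->]];
    pose proof (pi_vcell_column _ _ _ _ _ _ _ He1 Hy0);
    pose proof (pi_vcell_column _ _ _ _ _ _ _ He2 Hyl);
    unfold m in *; lia.
Qed.
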